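(* Let $x,y,z$ be indeterminates over the field $\mathbb{Q}$ of rational numbers. The Krull domain $R=\mathbb{Q}[x,y,zx,zy]$ (the subring of $\mathbb{Q}[x,y,z]$ generated over $\mathbb{Q}$ by $x,y,zx,zy$) is not a half-factorial domain.
   Context: A half-factorial domain is an atomic domain in which any two factorizations of a nonzero nonunit into irreducible elements have the same number of factors. *)

From HB Require Import structures.
From mathcomp Require Import all_boot all_order all_algebra.
From mathcomp Require Import mpoly.
Set Implicit Arguments. Unset Strict Implicit. Unset Printing Implicit Defensive.
Import GRing.Theory.
Local Open Scope ring_scope.

(* Factorization notions inside a subring of a commutative ring A,
   given as a predicate S : A -> Prop (units and irreducibles are taken
   relative to S, not to A). *)
Section SubringFactorization.
Variable A : comNzRingType.
Variable S : A -> Prop.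

Definition sunit (u : A) : Prop := S u /\ exists2 v, S v & u * v = 1.

Definition sirreducible (a : A) : Prop :=
  [/\ S a, a != 0, ~ sunit a &
      forall b c, S b -> S c -> a = b * c -> sunit b \/ sunit c].

Definition sfactorization (s : seq A) : Prop := forall a, a \in s -> sirreducible a.

Definition satomic : Prop :=
  forall a, S a -> a != 0 -> ~ sunit a ->
    exists2 s, sfactorization s & a = \prod_(b <- s) b.

Definition shalf_factorial : Prop :=
  satomic /\
  forall s1 s2 : seq A, sfactorization s1 -> sfactorization s2 ->
    \prod_(b <- s1) b = \prod_(b <- s2) b -> size s1 = size s2.
End SubringFactorization.

(* Q[x,y,z] with x = 'X_0, y = 'X_1, z = 'X_2. *)
Definition QXYZ := {mpoly rat[3]}.

(* The Q-subalgebra Q[x, y, zx, zy] of Q[x,y,z]: the image of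
   Q[t0,t1,t2,t3] under t0 |-> x, t1 |-> y, t2 |-> z x, t3 |-> z y. *)
Definition gensR : 4.-tuple QXYZ :=
  [tuple 'X_0; 'X_1; 'X_2 * 'X_0; 'X_2 * 'X_1].

Definition inR (p : QXYZ) : Prop :=
  exists q : {mpoly rat[4]}, p = q \mPo gensR.

From HB Require Import structures.
From mathcomp Require Import all_boot all_order all_algebra.
From mathcomp Require Import mpoly ring zify.
Set Implicit Arguments. Unset Strict Implicit. Unset Printing Implicit Defensive.
Import Order.TTheory GRing.Theory Num.Theory.
Local Open Scope ring_scope.

(* With f = x^2 + y^2, g = x^2 + (zx)^2 = x^2 (1 + z^2) and
   h = x^2 + y^2 + (zx)^2 + (zy)^2 = f (1 + z^2), all in R, we have
   x * x * h = g * f, so it suffices to show that x, f, g and h are irreducible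
   in R; then x^2 h has factorizations of lengths 3 and 2.  The units of R are
   the nonzero constants, so irreducibility means: in every factorization
   a = b c with b, c in R one factor is constant.
   As polynomials in z, g and h have the shape d + d z^2 with d = x^2 or
   x^2 + y^2, and f has the shape x^2 + y^2 as a polynomial in y.  For
   P = a + e X^2 with a e > 0 at some real point there is no factorization
   P = (B_0 + B_1 X)(C_0 + C_1 X), since then P_0 P_2 = -(B_1 C_0)^2.  In a
   factorization into degrees 0 and 2, the leading coefficient of the factor
   of degree 2 has total degree at least 2, because every monomial
   x^a y^b z^c of R satisfies c <= a + b; as it divides e, whose degree is at
   most 2, the other factor is constant.  This is where R differs from
   Q[x,y,z], in which g = x^2 (1 + z^2) is reducible. *)

Lemma coefM_size2 (D : comNzRingType) (B C : {poly D}) :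
  (size B <= 2)%N -> (size C <= 2)%N ->
  (B * C)`_0 * (B * C)`_2 = ((B * C)`_1 - B`_1 * C`_0) * (B`_1 * C`_0).
Proof.
move=> sB sC; rewrite !coefM !big_ord_recr !big_ord0 /= !add0r.
by rewrite [B`_2]nth_default // [C`_2]nth_default //; ring.
Qed.

Lemma coef_even_quadratic (D : nzRingType) (a e : D) i :
  (a%:P + e%:P * 'X^2)`_i = if i == 0%N then a else if i == 2%N then e else 0.
Proof.
rewrite coefD coefC coefCM coefXn.
by case: i => [|[|[|i]]]; rewrite /= ?mulr0 ?mulr1 ?addr0 ?add0r.
Qed.

Lemma size_even_quadratic (D : idomainType) (a e : D) :
  e != 0 -> size (a%:P + e%:P * 'X^2) = 3%N.
Proof.
move=> nze; rewrite addrC size_polyDl size_Cmul ?size_polyXn //.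
by rewrite (leq_ltn_trans (size_polyC_leq1 a)).
Qed.

Lemma size_factors_quadratic (D : idomainType) (F : realDomainType)
    (f : {rmorphism D -> F}) (B C P : {poly D}) :
  B * C = P -> size P = 3%N -> P`_1 = 0 -> 0 < f (P`_0 * P`_2) ->
  size B = 1%N /\ size C = 3%N \/ size B = 3%N /\ size C = 1%N.
Proof.
move=> defP sP P1 fP.
have nzP : P != 0 by rewrite -size_poly_eq0 sP.
have nzB : B != 0 by apply: contraNneq nzP => B0; rewrite -defP B0 mul0r.
have nzC : C != 0 by apply: contraNneq nzP => C0; rewrite -defP C0 mulr0.
have := size_mul nzB nzC; rewrite defP sP.
have := size_poly_gt0 B; have := size_poly_gt0 C; rewrite nzB nzC => C_gt0 B_gt0 sBC.
have [/andP[sB sC]|] := boolP ((size B <= 2) && (size C <= 2))%N; last by lia.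
move: fP; rewrite -defP coefM_size2 // defP P1 sub0r mulNr -expr2.
by rewrite rmorphN rmorphXn oppr_gt0 ltNge sqr_ge0.
Qed.

Lemma polyC_factors (D : idomainType) (B C : {poly D}) (a : D) :
  B * C = a%:P -> a != 0 -> [/\ B = (B`_0)%:P, C = (C`_0)%:P & B`_0 * C`_0 = a].
Proof.
move=> defa nza; have nzaP : a%:P != 0 by rewrite polyC_eq0.
have nzB : B != 0 by apply: contraNneq nzaP => B0; rewrite -defa B0 mul0r.
have nzC : C != 0 by apply: contraNneq nzaP => C0; rewrite -defa C0 mulr0.
have := size_mul nzB nzC; rewrite defa size_polyC nza.
have := size_poly_gt0 B; have := size_poly_gt0 C; rewrite nzB nzC => C_gt0 B_gt0 sBC.
have defB : B = (B`_0)%:P by apply: size1_polyC; lia.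
have defC : C = (C`_0)%:P by apply: size1_polyC; lia.
by split=> //; apply: polyC_inj; rewrite polyCM -defB -defC.
Qed.

Section MpolyConstantFactors.
Variables (n : nat) (R : idomainType).
Implicit Types p q : {mpoly R[n]}.

Lemma msize_mul_le_const p q :
  q != 0 -> (msize (p * q) <= msize q)%N -> (msize p <= 1)%N.
Proof.
have [-> _ _|nzp nzq] := eqVneq p 0; first by rewrite msize0.
rewrite msizeM //; have := msize_poly_eq0 q; rewrite (negbTE nzq); lia.
Qed.

Lemma mpoly_unit_msize p q : p * q = 1 -> (msize p <= 1)%N.
Proof.
move=> pq1; have nzq : q != 0 by apply: contra_eq_neq pq1 => ->; rewrite mulr0 eq_sym oner_neq0.
apply: (msize_mul_le_const nzq); rewrite pq1 msize1 lt0n msize_poly_eq0 //.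
Qed.

Lemma meval_neq_msize_gt1 p (u v : 'I_n -> R) : p.@[u] != p.@[v] -> (1 < msize p)%N.
Proof. by rewrite ltnNge; apply: contra => /msize1_polyC ->; rewrite !mevalC. Qed.

End MpolyConstantFactors.

Section ConstantFactors.
Variables (n : nat) (F : fieldType) (S : {mpoly F[n]} -> Prop).
Hypothesis S_const : forall c : F, S c%:MP.

Lemma sunit_mpolyC (c : F) : c != 0 -> sunit S c%:MP.
Proof.
by move=> nzc; split=> //; exists c^-1%:MP => //; rewrite -mpolyCM divff.
Qed.

Lemma sirreducible_mpoly a : S a -> (1 < msize a)%N ->
  (forall b c, S b -> S c -> a = b * c -> (msize b <= 1)%N \/ (msize c <= 1)%N) ->
  sirreducible S a.
Proof.
move=> Sa a_gt1 const_factor.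
have nza : a != 0 by rewrite -msize_poly_eq0 -lt0n ltnW.
split=> //.
  by case=> _ [v _ /mpoly_unit_msize]; rewrite leqNgt a_gt1.
move=> b c Sb Sc defa.
have nzb : b != 0 by apply: contraNneq nza => b0; rewrite defa b0 mul0r.
have nzc : c != 0 by apply: contraNneq nza => c0; rewrite defa c0 mulr0.
case: (const_factor b c Sb Sc defa) => /msize1_polyC def; [left|right];
  rewrite def; apply: sunit_mpolyC; by rewrite -(mpolyC_eq0 n) -def.
Qed.

End ConstantFactors.

Section MonomialsLastVariable.
Variable n : nat.
Local Notation widen := (widen_ord (leqnSn n)).

Definition mnmnarrow (m : 'X_{1..n.+1}) : 'X_{1..n} := [multinom m (widen i) | i < n].

Definition mnmextend (m : 'X_{1..n}) (k : nat) : 'X_{1..n.+1} :=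
  (mnmwiden m + U_(ord_max) *+ k)%MM.

Lemma widen_neq_max (i : 'I_n) : (ord_max == widen i) = false.
Proof. by rewrite -val_eqE /= gtn_eqF. Qed.

Lemma mnmextend_max m k : mnmextend m k ord_max = k.
Proof. by rewrite mnmDE mnmwiden_ordmax mulmnE mnm1E eqxx mul1n. Qed.

Lemma mnmextend_widen m k i : mnmextend m k (widen i) = m i.
Proof. by rewrite mnmDE mnmwiden_widen mulmnE mnm1E widen_neq_max addn0. Qed.

Lemma mnmextendK m k : mnmnarrow (mnmextend m k) = m.
Proof. by apply/mnmP=> i; rewrite mnmE mnmextend_widen. Qed.

Lemma mnmnarrowK m : mnmextend (mnmnarrow m) (m ord_max) = m.
Proof.
apply/mnmP=> i; case: (unliftP ord_max i) => [j ->|->]; last exact: mnmextend_max.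
have -> : lift ord_max j = widen j by apply/val_inj; rewrite /= /bump leqNgt ltn_ord.
by rewrite mnmextend_widen mnmE.
Qed.

Lemma mdeg_mnmextend m k : mdeg (mnmextend m k) = (mdeg m + k)%N.
Proof.
rewrite mdegD mdegMn mdeg1 mul1n !mdegE big_ord_recr /= mnmwiden_ordmax addn0.
by congr (_ + _)%N; apply: eq_bigr => i _; rewrite mnmwiden_widen.
Qed.

End MonomialsLastVariable.

Section MpolyUnivariate.
Variables (n : nat) (R : nzRingType).
Local Notation widen := (widen_ord (leqnSn n)).
Implicit Types p : {mpoly R[n.+1]}.

Lemma coef_muni p k m : ((muni p)`_k)@_m = p@_(mnmextend m k).
Proof.
rewrite muniE coef_sum raddf_sum [in RHS](mpolyE p) raddf_sum /=.
apply: eq_bigr => m' _; rewrite -/(mnmnarrow m') coefZ coefXn.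
have [<-|ne] := eqVneq (m' ord_max) k.
  rewrite mulr1 !mcoeffZ !mcoeffX; congr (_ * (nat_of_bool _)%:R).
  by apply/idP/idP => /eqP defm; [rewrite -defm mnmnarrowK | rewrite defm mnmextendK].
rewrite mulr0 mcoeff0 mcoeffZ mcoeffX; case: eqP => [defm'|]; last by rewrite mulr0.
by case/eqP: ne; rewrite defm' mnmextend_max.
Qed.

Lemma muni_inj : injective (@muni n R).
Proof.
move=> p q eq_pq; apply/mpolyP => m.
by rewrite -(mnmnarrowK m) -!coef_muni eq_pq.
Qed.

Lemma muni_polyC_msize p (c : {mpoly R[n]}) :
  muni p = c%:P -> (msize c <= 1)%N -> (msize p <= 1)%N.
Proof.
move=> defp /msize1_polyC defc; rewrite defc -muniC in defp.
by rewrite (muni_inj defp) msizeC leq_b1.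
Qed.

Lemma muni_Xwiden (i : 'I_n.+1) (j : 'I_n) :
  i = j :> nat -> muni ('X_i : {mpoly R[n.+1]}) = ('X_j)%:P.
Proof.
move=> eq_ij; have -> : i = widen j by apply/val_inj.
rewrite muniE msuppX big_seq1 mcoeffX eqxx scale1r mnm1E eq_sym widen_neq_max expr0.
rewrite -alg_polyC; congr (_ *: _); congr 'X_[_].
by apply/mnmP => k; rewrite mnmE !mnm1E -!val_eqE.
Qed.

Lemma muni_Xmax (i : 'I_n.+1) : i = n :> nat -> muni ('X_i : {mpoly R[n.+1]}) = 'X.
Proof.
move=> eq_in; have -> : i = ord_max by apply/val_inj.
rewrite muniE msuppX big_seq1 mcoeffX eqxx scale1r mnm1E eqxx expr1.
rewrite -/(mnmnarrow U_(@ord_max n)%MM).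
suff -> : mnmnarrow U_(@ord_max n) = 0%MM by rewrite mpolyX0 scale1r.
by apply/mnmP => j; rewrite mnmE mnm1E widen_neq_max mnm0E.
Qed.

End MpolyUnivariate.

Section EvenQuadraticInLastVariable.
Variables (n : nat) (R : realDomainType).
Implicit Types (a e : {mpoly R[n]}) (b c : {mpoly R[n.+1]}).

Lemma muni_polyC_factor_const b c P :
  muni b * muni c = P -> size (muni b) = 1%N -> muni c != 0 ->
  (msize (lead_coef P) <= msize (lead_coef (muni c)))%N -> (msize b <= 1)%N.
Proof.
move=> defP sb nzc; have defb := size1_polyC (eq_leq sb).
rewrite -defP defb lead_coefM lead_coefC => le_lead.
apply: (muni_polyC_msize defb).
have nzl : lead_coef (muni c) != 0 by rewrite lead_coef_eq0.
exact: (msize_mul_le_const nzl le_lead).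
Qed.

Lemma muni_const_factor_even_quadratic (v : 'I_n -> R) a e b c :
  muni (b * c) = a%:P + e%:P * 'X^2 -> 0 < (a * e).@[v] ->
  (size (muni b) = 3%N -> (msize e <= msize (lead_coef (muni b)))%N) ->
  (size (muni c) = 3%N -> (msize e <= msize (lead_coef (muni c)))%N) ->
  (msize b <= 1)%N \/ (msize c <= 1)%N.
Proof.
set P := _ + _ => + pos_ae; rewrite muniM.
have nze : e != 0 by apply: contraTneq pos_ae => ->; rewrite mulr0 rmorph0 ltxx.
have sP : size P = 3%N by apply: size_even_quadratic.
have leadP : lead_coef P = e by rewrite lead_coefE sP coef_even_quadratic.
have P1 : P`_1 = 0 by rewrite coef_even_quadratic.
have posP : 0 < (P`_0 * P`_2).@[v] by rewrite !coef_even_quadratic.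
wlog [sb sc] : b c / size (muni b) = 1%N /\ size (muni c) = 3%N
    => [wlog_b defP hb hc | defP _ hc].
  have [|[sb sc]] := @size_factors_quadratic _ _ (meval v) _ _ _ defP sP P1 posP.
    by move=> sbc; apply: wlog_b.
  by apply/or_comm; apply: (wlog_b c b (conj sc sb) _ hc hb); rewrite mulrC.
have nzc : muni c != 0 by rewrite -size_poly_eq0 sc.
by left; apply: (muni_polyC_factor_const defP sb nzc); rewrite leadP hc.
Qed.

End EvenQuadraticInLastVariable.

Section ZCone.
Variables (n : nat) (R : comNzRingType).

(* The z-exponent (the last one) is at most the sum of the others: these are
   the monomials of Q[x_1, ..., x_n, z x_1, ..., z x_n]. *)
Definition zcone (m : 'X_{1..n.+1}) : bool := ((m ord_max).*2 <= mdeg m)%N.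

Definition zcone_mpoly : {pred {mpoly R[n.+1]}} := fun p => all zcone (msupp p).

Lemma zconeD m1 m2 : zcone m1 -> zcone m2 -> zcone (m1 + m2)%MM.
Proof. by rewrite /zcone mnmDE mdegD; lia. Qed.

Lemma zcone_mpolyX m : zcone m -> 'X_[m] \in zcone_mpoly.
Proof. by rewrite unfold_in /zcone_mpoly msuppX /= andbT. Qed.

Lemma zcone_mpoly_semiring_closed : semiring_closed zcone_mpoly.
Proof.
split; split.
- by rewrite unfold_in /zcone_mpoly msupp0.
- move=> p q /allP Zp /allP Zq; apply/allP => m /msuppD_le.
  by rewrite mem_cat => /orP[/Zp|/Zq].
- by rewrite -mpolyX0 zcone_mpolyX // /zcone mdeg0 mnm0E.
- move=> p q /allP Zp /allP Zq; apply/allP => m /msuppM_le /allpairsP.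
  by case=> -[m1 m2] /= [/Zp Z1 /Zq Z2 ->]; apply: zconeD.
Qed.

HB.instance Definition _ :=
  GRing.isSemiringClosed.Build {mpoly R[n.+1]} zcone_mpoly zcone_mpoly_semiring_closed.

Lemma zcone_mpolyC (c : R) : c%:MP \in zcone_mpoly.
Proof.
by rewrite unfold_in /zcone_mpoly msuppC; case: eqP => //= _; rewrite /zcone mdeg0 mnm0E.
Qed.

Lemma zcone_comp_mpoly k (q : {mpoly R[k]}) (lq : k.-tuple {mpoly R[n.+1]}) :
  (forall i, tnth lq i \in zcone_mpoly) -> q \mPo lq \in zcone_mpoly.
Proof.
move=> Zlq; rewrite comp_mpolyEX; apply: rpred_sum => m _.
rewrite -mul_mpolyC rpredM ?zcone_mpolyC // comp_mpolyX.
by apply: rpred_prod => i _; apply: rpredX.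
Qed.

Lemma zcone_coef_muni p k :
  p \in zcone_mpoly -> (muni p)`_k != 0 -> (k < msize ((muni p)`_k))%N.
Proof.
move=> /allP Zp /mlead_supp mleadP; apply: leq_trans (msize_mdeg_lt mleadP).
move: mleadP; rewrite mcoeff_msupp coef_muni -mcoeff_msupp => /Zp.
by rewrite /zcone mnmextend_max mdeg_mnmextend; lia.
Qed.

End ZCone.

Local Notation x := ('X_0 : QXYZ).
Local Notation y := ('X_1 : QXYZ).
Local Notation z := ('X_2 : QXYZ).
Local Notation f := (x ^+ 2 + y ^+ 2).
Local Notation g := (x ^+ 2 + (z * x) ^+ 2).
Local Notation h := (x ^+ 2 + y ^+ 2 + (z * x) ^+ 2 + (z * y) ^+ 2).

Lemma inR_zcone p : inR p -> p \in @zcone_mpoly 2 rat.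
Proof.
case=> q ->; apply: zcone_comp_mpoly => i; rewrite (tnth_nth 0).
by case: i => -[|[|[|[|]]]] //= _;
  rewrite -?mpolyXD zcone_mpolyX // /zcone ?mdegD !mdeg1 ?mnmDE !mnm1E.
Qed.

Lemma inR_mpolyC (c : rat) : inR c%:MP.
Proof. by exists c%:MP; rewrite comp_mpolyC. Qed.

Lemma inR_lead_muni q : inR q -> size (muni q) = 3%N -> (3 <= msize (lead_coef (muni q)))%N.
Proof.
move=> /inR_zcone Zq sq.
have : lead_coef (muni q) != 0 by rewrite lead_coef_eq0 -size_poly_eq0 sq.
by rewrite lead_coefE sq; apply: zcone_coef_muni.
Qed.

Lemma muni_x : muni x = ('X_0)%:P. Proof. exact: muni_Xwiden. Qed.
Lemma muni_y : muni y = ('X_1)%:P. Proof. exact: muni_Xwiden. Qed.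
Lemma muni_z : muni z = 'X. Proof. exact: muni_Xmax. Qed.

Lemma muni_sum_sq :
  muni ('X_0 ^+ 2 + 'X_1 ^+ 2 : {mpoly rat[2]}) = ('X_0 ^+ 2)%:P + 1%:P * 'X^2.
Proof.
by rewrite rmorphD !rmorphXn /= (@muni_Xwiden 1 _ 0 0) // (@muni_Xmax 1 _ 1) // polyC1 mul1r.
Qed.

Lemma msize_Xsq n (R : nzRingType) (i : 'I_n) : msize ('X_i ^+ 2 : {mpoly R[n]}) = 3%N.
Proof. by rewrite mpolyXn msizeX mdegMn mdeg1. Qed.

Lemma inR_const_factor_even_quadratic (v : 'I_2 -> rat) (d : {mpoly rat[2]}) (b c : QXYZ) :
  inR b -> inR c -> muni (b * c) = d%:P + d%:P * 'X^2 -> (msize d <= 3)%N -> d.@[v] != 0 ->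
  (msize b <= 1)%N \/ (msize c <= 1)%N.
Proof.
move=> Rb Rc defbc sd dv; apply: (muni_const_factor_even_quadratic (v := v) defbc).
- by rewrite rmorphM /= -expr2 exprn_even_gt0.
- by move=> /(inR_lead_muni Rb); apply: leq_trans.
- by move=> /(inR_lead_muni Rc); apply: leq_trans.
Qed.

Lemma const_factor_f (b c : QXYZ) :
  b * c = f -> (msize b <= 1)%N \/ (msize c <= 1)%N.
Proof.
set s : {mpoly rat[2]} := 'X_0 ^+ 2 + 'X_1 ^+ 2.
have muni_f : muni f = s%:P by rewrite rmorphD !rmorphXn /= muni_x muni_y polyCD !polyC_exp.
move=> /(congr1 (@muni 2 rat)); rewrite muniM muni_f => def_s.
have nz_s : s != 0.
  apply/eqP => /(congr1 (meval (fun=> 1))).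
  by rewrite rmorph0 rmorphD !rmorphXn /= !mevalXU.
have [defb defc def_s'] := polyC_factors def_s nz_s.
have lead_ge1 (q : {mpoly rat[2]}) : size (muni q) = 3%N ->
    (msize (1 : {mpoly rat[1]}) <= msize (lead_coef (muni q)))%N.
  by move=> sq; rewrite msize1 lt0n msize_poly_eq0 lead_coef_eq0 -size_poly_eq0 sq.
have [] := muni_const_factor_even_quadratic (v := fun=> 1)
  (etrans (congr1 (@muni 1 rat) def_s') muni_sum_sq) _ (lead_ge1 _) (lead_ge1 _).
- by rewrite mulr1 rmorphXn /= mevalXU expr1n.
- by move=> /(muni_polyC_msize defb); left.
- by move=> /(muni_polyC_msize defc); right.
Qed.

Lemma inR_sirreducible a : inR a ->
  a.@[fun=> 0] != a.@[fun i => (i == 0)%:R] ->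
  (forall b c, inR b -> inR c -> a = b * c -> (msize b <= 1)%N \/ (msize c <= 1)%N) ->
  sirreducible inR a.
Proof. by move=> Ra /meval_neq_msize_gt1; apply: (sirreducible_mpoly inR_mpolyC Ra). Qed.

Lemma sirreducible_x : sirreducible inR x.
Proof.
apply: inR_sirreducible; first by exists 'X_0; rewrite comp_mpolyXU.
  by rewrite !mevalXU.
move=> b c _ _ defx; have [c_le1|c_gt1] := leqP (msize c) 1; [by right | left].
have nzc : c != 0 by rewrite -msize_poly_eq0 -lt0n ltnW.
by apply: (msize_mul_le_const nzc); rewrite -defx msizeX mdeg1.
Qed.

Lemma sirreducible_f : sirreducible inR f.
Proof.
apply: inR_sirreducible => [||b c _ _ /esym]; last exact: const_factor_f.
  by exists ('X_0 ^+ 2 + 'X_1 ^+ 2); rewrite rmorphD !rmorphXn /= !comp_mpolyXU.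
by rewrite !(mevalD, mevalM, rmorphXn, mevalXU).
Qed.

Lemma sirreducible_g : sirreducible inR g.
Proof.
apply: inR_sirreducible => [||b c Rb Rc /esym defg].
- by exists ('X_0 ^+ 2 + 'X_2 ^+ 2); rewrite !(rmorphD, rmorphXn) /= !comp_mpolyXU.
- by rewrite !(mevalD, mevalM, rmorphXn, mevalXU).
apply: (inR_const_factor_even_quadratic (v := fun=> 1) (d := 'X_0 ^+ 2)) Rb Rc _ _ _.
- by rewrite defg !(rmorphD, rmorphM, rmorphXn) /= muni_x muni_z; ring.
- by rewrite msize_Xsq.
- by rewrite rmorphXn /= mevalXU expr1n oner_neq0.
Qed.

Lemma sirreducible_h : sirreducible inR h.
Proof.
apply: inR_sirreducible => [||b c Rb Rc /esym defh].
- exists ('X_0 ^+ 2 + 'X_1 ^+ 2 + 'X_2 ^+ 2 + 'X_3 ^+ 2).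
  by rewrite !(rmorphD, rmorphXn) /= !comp_mpolyXU.
- by rewrite !(mevalD, mevalM, rmorphXn, mevalXU).
apply: (inR_const_factor_even_quadratic (v := fun=> 1) (d := 'X_0 ^+ 2 + 'X_1 ^+ 2)) Rb Rc _ _ _.
- by rewrite defh !(rmorphD, rmorphM, rmorphXn) /= muni_x muni_y muni_z; ring.
- by rewrite (leq_trans (msizeD_le _ _)) // !msize_Xsq.
- by rewrite mevalD !rmorphXn /= !mevalXU.
Qed.

Theorem mainTheorem3 : ~ shalf_factorial inR.
Proof.
case=> _ /(_ [:: h; x; x] [:: g; f]) size_eq.
have fact3 : sfactorization inR [:: h; x; x].
  by move=> a; rewrite !inE => /or3P[] /eqP ->;
    [exact: sirreducible_h | exact: sirreducible_x | exact: sirreducible_x].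
have fact2 : sfactorization inR [:: g; f].
  by move=> a; rewrite !inE => /orP[] /eqP ->; [exact: sirreducible_g | exact: sirreducible_f].
have /size_eq : \prod_(a <- [:: h; x; x]) a = \prod_(a <- [:: g; f]) a.
  by rewrite !big_cons !big_nil; ring.
by move=> /(_ fact3 fact2).
Qed.
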